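(* Let $(\varphi,\mathcal A,V)$ be a linear system with $\dim V=1$ (so $\varphi(a)$ is a scalar multiple of the identity for each $a$). Then the universal dilation of $(\varphi,\mathcal A,V)$ is equivalent to its principle (canonical) dilation if and only if $\ker\varphi$ contains no nonzero left ideal of $\mathcal A$.
   Context: Fix a field $\mathbb F$; all algebras and vector spaces are over $\mathbb F$, and $L(X)$ is the algebra of linear maps $X\to X$. A linear system $(\varphi,\mathcal A,V)$: $\mathcal A$ a unital associative algebra with unit $I$, $V$ a vector space, $\varphi:\mathcal A\to L(V)$ linear with $\varphi(I)=\mathrm{id}_V$. A homomorphism dilation system $(\pi,S,T,W)$: $W$ a vector space, $\pi:\mathcal A\to L(W)$ a unital homomorphism, $T:V\to W$ injective linear, $S:W\to V$ surjective linear, $\varphi(a)=S\pi(a)T$ for all $a$. Two linearly minimal systems (i.e. with $W=\mathrm{span}\{\pi(a)Tv\}$) are equivalent if there is a bijective linear $R:W_1\to W_2$ with $RT_1=T_2$, $S_2R=S_1$, $\pi_1(a)=R^{-1}\pi_2(a)R$ for all $a$. The universal dilation is $(\pi_u,S_u,T_u,\mathcal A\otimes V)$ with $\pi_u(a)(b\otimes x)=(ab)\otimes x$, $T_ux=I\otimes x$, $S_u(a\otimes x)=\varphi(a)x$. Canonical dilation: $\alpha_{a,x}\in L(\mathcal A,V)$, $\alpha_{a,x}(b)=\varphi(ba)x$; $W_c=\mathrm{span}\{\alpha_{a,x}\}$; $\pi_c(a)\alpha_{b,x}=\alpha_{ab,x}$; $T_cx=\alpha_{I,x}$; $S_c(\alpha_{a,x})=\varphi(a)x$.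 *)

From HB Require Import structures.
From mathcomp Require Import all_boot all_order all_algebra.
Set Implicit Arguments. Unset Strict Implicit. Unset Printing Implicit Defensive.
Import GRing.Theory.
Local Open Scope ring_scope.

Section Defs.
Variable F : fieldType.

Definition linear_system (A : algType F) (V : lmodType F) (phi : A -> V -> V) : Prop :=
  [/\ forall a, linear (phi a),
      forall (k : F) (a b : A) (v : V), phi (k *: a + b) v = k *: phi a v + phi b v
    & forall v, phi 1 v = v].

Definition dim_one (V : lmodType F) : Prop :=
  exists v0 : V, v0 != 0 /\ forall v : V, exists c : F, v = c *: v0.

Definition is_tensor_product (A V W : lmodType F) (tens : A -> V -> W) : Prop :=
  [/\ forall a, linear (tens a),
      forall x, linear (fun a => tens a x),
      forall w : W, exists s : seq (A * V), w = \sum_(p <- s) tens p.1 p.2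
    & forall (U : lmodType F) (f : A -> V -> U),
        (forall a, linear (f a)) -> (forall x, linear (fun a => f a x)) ->
        exists g : W -> U, linear g /\ (forall a x, g (tens a x) = f a x) /\
          forall g' : W -> U, linear g' -> (forall a x, g' (tens a x) = f a x) ->
            forall w, g' w = g w].

(* (pi_u, S_u, T_u, W) is the universal dilation of (phi, A, V), where
   W = A (x) V via tens, pi_u(a)(b (x) x) = (ab) (x) x, S_u(a (x) x) = phi(a)x,
   and T_u x = 1 (x) x (T_u is taken to be tens 1). *)
Definition universal_dilation (A : algType F) (V : lmodType F) (phi : A -> V -> V)
  (W : lmodType F) (tens : A -> V -> W) (pi_u : A -> W -> W) (S_u : W -> V) : Prop :=
  [/\ is_tensor_product tens,
      forall a, linear (pi_u a),
      forall a b x, pi_u a (tens b x) = tens (a * b) x,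
      linear S_u
    & forall a x, S_u (tens a x) = phi a x].

(* Canonical dilation.  alpha_{a,x}(b) = phi(ba) x.  W_c = span{alpha_{a,x}} is
   the set of functions A -> V equal (pointwise) to a finite sum of alpha's. *)
Definition alpha (A : algType F) (V : lmodType F) (phi : A -> V -> V) (a : A) (x : V) : A -> V :=
  fun b => phi (b * a) x.

Definition in_Wc (A : algType F) (V : lmodType F) (phi : A -> V -> V) (f : A -> V) : Prop :=
  exists s : seq (A * V), forall b, f b = \sum_(p <- s) alpha phi p.1 p.2 b.

(* pi_c(a) alpha_{b,x} = alpha_{ab,x}: its linear extension to W_c is
   f |-> (c |-> f (c * a)). *)
Definition pi_c (A : algType F) (V : lmodType F) (a : A) (f : A -> V) : A -> V :=
  fun c => f (c * a).
Definition T_c (A : algType F) (V : lmodType F) (phi : A -> V -> V) (x : V) : A -> V :=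
  alpha phi 1 x.
(* S_c(alpha_{a,x}) = phi(a) x = alpha_{a,x}(1): its linear extension is evaluation at 1. *)
Definition S_c (A : algType F) (V : lmodType F) (f : A -> V) : V := f 1.

(* The dilation (pi_u, S_u, T_u = tens 1, W) is equivalent to the canonical one:
   there is a linear bijection R : W -> W_c (W_c a subspace of the functions A -> V,
   equality of functions taken pointwise) with R T_u = T_c, S_c R = S_u and
   pi_u(a) = R^{-1} pi_c(a) R, i.e. R pi_u(a) = pi_c(a) R. *)
Definition equivalent_to_canonical (A : algType F) (V : lmodType F) (phi : A -> V -> V)
  (W : lmodType F) (tens : A -> V -> W) (pi_u : A -> W -> W) (S_u : W -> V) : Prop :=
  exists R : W -> A -> V,
    (forall (k : F) (w w' : W) (b : A), R (k *: w + w') b = k *: R w b + R w' b) /\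
    (forall w w' : W, (forall b, R w b = R w' b) -> w = w') /\
    (forall w : W, in_Wc phi (R w)) /\
    (forall f : A -> V, in_Wc phi f -> exists w : W, forall b, R w b = f b) /\
    (forall (x : V) (b : A), R (tens 1 x) b = T_c phi x b) /\
    (forall w : W, S_c (R w) = S_u w) /\
    (forall (a : A) (w : W) (b : A), R (pi_u a w) b = pi_c a (R w) b).

Definition left_ideal (A : algType F) (J : A -> Prop) : Prop :=
  [/\ J 0,
      forall x y, J x -> J y -> J (x + y),
      forall (k : F) x, J x -> J (k *: x)
    & forall a x, J x -> J (a * x)].

Definition in_ker (A : algType F) (V : lmodType F) (phi : A -> V -> V) (a : A) : Prop :=
  forall v, phi a v = 0.

End Defs.

From HB Require Import structures.
From mathcomp Require Import all_boot all_order all_algebra.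
Import GRing.Theory.
Set Implicit Arguments.
Unset Strict Implicit.
Unset Printing Implicit Defensive.
Local Open Scope ring_scope.

(* When V is spanned by v0, every element of A (x) V is a pure tensor a (x) v0,
   and a (x) v0 = 0 only for a = 0 (pair with the coordinate of V).  The map
   w |-> (b |-> S_u (pi_u(b) w)) intertwines the universal and the canonical
   dilation and is onto W_c; it sends a (x) v0 to alpha_{a,v0}, so its kernel
   consists of the a (x) v0 with phi(ba) = 0 for all b, i.e. with a in the
   largest left ideal of A contained in ker phi.  Conversely, every equivalence
   sends a (x) x to alpha_{a,x}, hence kills a (x) v0 for a in that ideal. *)

Section LinearMaps.
Variables (F : fieldType) (U V : lmodType F) (f : U -> V).
Hypothesis f_linear : linear f.

Lemma linear_map0 : f 0 = 0.
Proof.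
have := f_linear 1 0 0; rewrite !scale1r addr0 => f00.
by apply: (@addrI _ (f 0)); rewrite addr0 -f00.
Qed.

Lemma linear_mapD x y : f (x + y) = f x + f y.
Proof. by have := f_linear 1 x y; rewrite !scale1r. Qed.

Lemma linear_mapZ k x : f (k *: x) = k *: f x.
Proof. by have := f_linear k x 0; rewrite !addr0 linear_map0 addr0. Qed.

Lemma linear_map_sum (I : Type) (s : seq I) (g : I -> U) :
  f (\sum_(i <- s) g i) = \sum_(i <- s) f (g i).
Proof.
elim: s => [|i s IH]; first by rewrite !big_nil linear_map0.
by rewrite !big_cons linear_mapD IH.
Qed.

End LinearMaps.

Section Line.
Variables (F : fieldType) (V : lmodType F) (v0 : V).
Hypotheses (v0_neq0 : v0 != 0) (v0_span : forall v : V, exists c : F, v = c *: v0).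

Lemma scaler_line_inj c c' : c *: v0 = c' *: v0 -> c = c'.
Proof.
move/eqP; rewrite -subr_eq0 -scalerBl scaler_eq0 (negbTE v0_neq0) orbF.
by rewrite subr_eq0 => /eqP.
Qed.

Let coord_ex v : exists c : F, v == c *: v0.
Proof. by have [c ->] := v0_span v; exists c. Qed.

Definition line_coord (v : V) : F := xchoose (coord_ex v).

Lemma line_coordK v : line_coord v *: v0 = v.
Proof. exact/esym/eqP/(xchooseP (coord_ex v)). Qed.

Lemma line_coord_linear k u v :
  line_coord (k *: u + v) = k * line_coord u + line_coord v.
Proof.
by apply: scaler_line_inj; rewrite line_coordK scalerDl -scalerA !line_coordK.
Qed.

Lemma line_coord_v0 : line_coord v0 = 1.
Proof. by apply: scaler_line_inj; rewrite line_coordK scale1r. Qed.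

Section TensorWithLine.
Variables (A W : lmodType F) (tens : A -> V -> W).
Hypothesis tens_tp : is_tensor_product tens.

Lemma tensor_line_pure w : exists a, w = tens a v0.
Proof.
have [tensL tensLl tens_span _] := tens_tp.
have [s ->] := tens_span w; elim: s => [|[b x] s [a IH]].
  by exists 0; rewrite big_nil (linear_map0 (tensLl v0)).
have [c ->] := v0_span x.
exists (c *: b + a); rewrite big_cons IH /= (linear_mapZ (tensL b)).
by rewrite (tensLl v0 c b a).
Qed.

Lemma tensor_line_eq0 a : tens a v0 = 0 -> a = 0.
Proof.
have [_ _ _ tens_univ] := tens_tp.
have coordL (b : A) : linear (fun x : V => line_coord x *: b).
  by move=> k u v /=; rewrite line_coord_linear scalerDl scalerA.
have coordLl (x : V) : linear (fun b : A => line_coord x *: b).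
  by move=> k u v /=; rewrite scalerDr !scalerA mulrC.
have [g [gL [g_tens _]]] := tens_univ A _ coordL coordLl.
move=> tens_a0; have := g_tens a v0.
by rewrite tens_a0 (linear_map0 gL) line_coord_v0 scale1r.
Qed.

End TensorWithLine.
End Line.

Section KernelCore.
Variables (F : fieldType) (A : algType F) (V : lmodType F) (phi : A -> V -> V).
Hypothesis phi_sys : linear_system phi.

Definition kernel_core (a : A) : Prop := forall b, in_ker phi (b * a).

Lemma left_ideal_kernel_core : left_ideal kernel_core.
Proof.
have [_ phiL _] := phi_sys; have phiLl v : linear (phi^~ v) := fun k x y => phiL k x y v.
split.
- by move=> b v; rewrite mulr0 (linear_map0 (phiLl v)).
- by move=> x y hx hy b v; rewrite mulrDr (linear_mapD (phiLl v)) hx hy addr0.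
- by move=> k x hx b v; rewrite -scalerAr (linear_mapZ (phiLl v)) hx scaler0.
- by move=> c x hx b; rewrite mulrA.
Qed.

Lemma kernel_core_sub_ker a : kernel_core a -> in_ker phi a.
Proof. by rewrite -[a in in_ker _ a]mul1r; apply. Qed.

Lemma left_ideal_sub_kernel_core (J : A -> Prop) :
  left_ideal J -> (forall a, J a -> in_ker phi a) -> forall a, J a -> kernel_core a.
Proof. by case=> _ _ _ JM Jker a Ja b; apply/Jker/JM. Qed.

End KernelCore.

Section CanonicalMap.
Variables (F : fieldType) (A : algType F) (V : lmodType F) (phi : A -> V -> V).
Variables (W : lmodType F) (tens : A -> V -> W) (pi_u : A -> W -> W) (S_u : W -> V).
Hypothesis udil : universal_dilation phi tens pi_u S_u.

Definition canon_map (w : W) : A -> V := fun b => S_u (pi_u b w).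

Lemma canon_map_tens a x : canon_map (tens a x) =1 alpha phi a x.
Proof. by have [_ _ piT _ ST] := udil; move=> b; rewrite /canon_map piT ST. Qed.

Lemma canon_map_linear k w w' b :
  canon_map (k *: w + w') b = k *: canon_map w b + canon_map w' b.
Proof. by have [_ piL _ SL _] := udil; rewrite /canon_map (piL b) SL. Qed.

Lemma canon_map_sum s b :
  canon_map (\sum_(p <- s) tens p.1 p.2) b = \sum_(p <- s) alpha phi p.1 p.2 b.
Proof.
have [_ piL _ SL _] := udil.
rewrite /canon_map (linear_map_sum (piL b)) (linear_map_sum SL).
by apply: eq_bigr => p _; apply: canon_map_tens.
Qed.

Lemma canon_map_in_Wc w : in_Wc phi (canon_map w).
Proof.
have [[_ _ tens_span _] _ _ _ _] := udil.
by have [s ->] := tens_span w; exists s; apply: canon_map_sum.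
Qed.

Lemma canon_map_onto f : in_Wc phi f -> exists w, canon_map w =1 f.
Proof.
by case=> s fE; exists (\sum_(p <- s) tens p.1 p.2) => b; rewrite fE canon_map_sum.
Qed.

Lemma canon_map_S w : S_c (canon_map w) = S_u w.
Proof.
have [[_ _ tens_span _] piL piT SL _] := udil.
have [s ->] := tens_span w; rewrite /S_c /canon_map.
rewrite (linear_map_sum (piL 1)) !(linear_map_sum SL).
by apply: eq_bigr => p _; rewrite piT mul1r.
Qed.

Lemma canon_map_pi a w b : canon_map (pi_u a w) b = pi_c a (canon_map w) b.
Proof.
have [[_ _ tens_span _] piL piT SL _] := udil.
have [s ->] := tens_span w; rewrite /pi_c /canon_map.
rewrite (linear_map_sum (piL a)) !(linear_map_sum (piL _)) !(linear_map_sum SL).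
by apply: eq_bigr => p _; rewrite !piT mulrA.
Qed.

Lemma equivalence_tens R :
  (forall (x : V) (b : A), R (tens 1 x) b = T_c phi x b) ->
  (forall (a : A) (w : W) (b : A), R (pi_u a w) b = pi_c a (R w) b) ->
  forall a x b, R (tens a x) b = alpha phi a x b.
Proof.
move=> RT Rpi a x b; have [_ _ piT _ _] := udil.
by rewrite -{1}[a]mulr1 -piT Rpi /pi_c RT /T_c /alpha mulr1.
Qed.

End CanonicalMap.

Section LineDilation.
Variables (F : fieldType) (A : algType F) (V : lmodType F) (phi : A -> V -> V).
Variables (W : lmodType F) (tens : A -> V -> W) (pi_u : A -> W -> W) (S_u : W -> V).
Variable v0 : V.
Hypotheses (v0_neq0 : v0 != 0) (v0_span : forall v : V, exists c : F, v = c *: v0).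
Hypotheses (phi_sys : linear_system phi) (udil : universal_dilation phi tens pi_u S_u).

Lemma in_ker_line a : phi a v0 = 0 -> in_ker phi a.
Proof.
move=> phia0 v; have [phiL _ _] := phi_sys; have [c ->] := v0_span v.
by rewrite (linear_mapZ (phiL a)) phia0 scaler0.
Qed.

Lemma canon_map_inj : (forall a, kernel_core phi a -> a = 0) ->
  forall w w', canon_map pi_u S_u w =1 canon_map pi_u S_u w' -> w = w'.
Proof.
have [tens_tp _ _ _ _] := udil; have [_ tensLl _ _] := tens_tp.
move=> core_trivial w w' eq_ww'; apply/eqP; rewrite -subr_eq0; apply/eqP.
have [a wE] := tensor_line_pure v0_span tens_tp (w - w').
suff a0 : a = 0 by rewrite wE a0 (linear_map0 (tensLl v0)).
apply: core_trivial => b; apply: in_ker_line.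
rewrite -[LHS]/(alpha phi a v0 b) -(canon_map_tens udil) -wE.
by rewrite -scaleN1r addrC (canon_map_linear udil) eq_ww' scaleN1r addNr.
Qed.

Lemma canon_map_equivalence : (forall a, kernel_core phi a -> a = 0) ->
  equivalent_to_canonical phi tens pi_u S_u.
Proof.
move=> core_trivial; exists (canon_map pi_u S_u).
split; first exact: (canon_map_linear udil).
split; first exact: canon_map_inj.
split; first exact: (canon_map_in_Wc udil).
split; first exact: (canon_map_onto udil).
split; first exact: (canon_map_tens udil).
by split; [exact: (canon_map_S udil) | exact: (canon_map_pi udil)].
Qed.

Lemma equivalence_core_trivial : equivalent_to_canonical phi tens pi_u S_u ->
  forall a, kernel_core phi a -> a = 0.
Proof.
move=> [R [RL [Rinj [_ [_ [RT [_ Rpi]]]]]]] a core_a.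
have [tens_tp _ _ _ _] := udil.
apply/(tensor_line_eq0 v0_neq0 v0_span tens_tp)/Rinj => b.
rewrite (equivalence_tens udil RT Rpi) (linear_map0 (fun k w w' => RL k w w' b)).
exact: core_a b v0.
Qed.

End LineDilation.

Theorem corollary4p3 (F : fieldType) (A : algType F) (V : lmodType F)
  (phi : A -> V -> V) (W : lmodType F) (tens : A -> V -> W)
  (pi_u : A -> W -> W) (S_u : W -> V) :
  linear_system phi -> dim_one V ->
  universal_dilation phi tens pi_u S_u ->
  (equivalent_to_canonical phi tens pi_u S_u <->
   ~ (exists J : A -> Prop,
        left_ideal J /\ (forall a, J a -> in_ker phi a) /\ exists a, J a /\ a <> 0)).
Proof.
move=> phi_sys [v0 [v0_neq0 v0_span]] udil; split.
- move=> equiv [J [J_ideal [Jker [a [Ja /eqP a_neq0]]]]].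
  have core_a := left_ideal_sub_kernel_core J_ideal Jker Ja.
  by rewrite (equivalence_core_trivial v0_neq0 v0_span udil equiv core_a) eqxx in a_neq0.
- move=> no_ideal; apply: (canon_map_equivalence v0_span phi_sys udil) => a core_a.
  case: (eqVneq a 0) => // /eqP a_neq0; case: no_ideal.
  exists (kernel_core phi); split; first exact: left_ideal_kernel_core.
  by split; [exact: kernel_core_sub_ker | exists a].
Qed.
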